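(* Let $G=(V,E)$ be an unweighted graph with $n$ vertices, and let $s,t\in V$. Then $$ B_{st}^{2}\leq n^{3}. $$
   Context: $L=D-A$ is the Laplacian of the unweighted graph $G$, $L^{+}$ its Moore–Penrose pseudoinverse, $L^{2+}=(L^+)^2$, and $1_v$ the indicator vector of vertex $v$. The biharmonic distance is $B_{st}=\sqrt{(1_s-1_t)^{T}L^{2+}(1_s-1_t)}$. *)

From HB Require Import structures.
From mathcomp Require Import all_boot all_order all_algebra.
From mathcomp Require Import reals.
From Stdlib Require Import ClassicalEpsilon.
Set Implicit Arguments. Unset Strict Implicit. Unset Printing Implicit Defensive.
Import Order.TTheory GRing.Theory Num.Theory.
Local Open Scope ring_scope.

Definition simple_graph (n : nat) (e : rel 'I_n) : Prop :=
  (forall i j, e i j = e j i) /\ (forall i, e i i = false).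

Definition adjmx (R : realType) (n : nat) (e : rel 'I_n) : 'M[R]_n :=
  \matrix_(i, j) (if e i j then 1 else 0).

Definition degmx (R : realType) (n : nat) (e : rel 'I_n) : 'M[R]_n :=
  \matrix_(i, j) (if i == j then (#|[set k | e i k]|)%:R else 0).

Definition laplacian (R : realType) (n : nat) (e : rel 'I_n) : 'M[R]_n :=
  degmx R e - adjmx R e.

Definition is_MP_pinv (R : realType) (m n : nat)
    (A : 'M[R]_(m, n)) (X : 'M[R]_(n, m)) : Prop :=
  [/\ A *m X *m A = A, X *m A *m X = X,
      (A *m X)^T = A *m X & (X *m A)^T = X *m A].

(* The Moore--Penrose pseudoinverse (chosen by classical description;
   it exists and is unique for real matrices). *)
Definition MP_pinv (R : realType) (m n : nat) (A : 'M[R]_(m, n)) : 'M[R]_(n, m) :=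
  epsilon (inhabits 0) (is_MP_pinv A).

Definition indic (R : realType) (n : nat) (v : 'I_n) : 'cV[R]_n :=
  \col_i (if i == v then 1 else 0).

Definition biharmonic_sq (R : realType) (n : nat) (e : rel 'I_n) (s t : 'I_n) : R :=
  let d := indic R s - indic R t in
  let Lp := MP_pinv (laplacian R e) in
  (d^T *m (Lp *m Lp) *m d) 0 0.

(* Let P average over connected components; then L^+ = (L + P)^-1 - P, and
   y := L^+ (1_s - 1_t) satisfies L y = (I - P)(1_s - 1_t), P y = 0 and
   B_st^2 = |y|^2.  For every vertex set S inside one component, the flux
   sum_{a in S} (L y)_a lies in [-1, 1].  If y_j > y_i with j ~ i, the
   superlevel set S = {k ~ i : y_k > y_i} is left by some edge, every edge
   (a, b) leaving it has y_b <= y_i < y_a, and these increments y_a - y_b sum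
   to the flux out of S; so some a in S has y_a <= y_i + 1.  The superlevel
   set of a is strictly smaller, and induction gives y_j - y_i <= #|S| <= n.
   As y has mean zero on each component, |y_a| <= n, whence B_st^2 <= n^3. *)

From HB Require Import structures.
From mathcomp Require Import all_boot all_order all_algebra.
From mathcomp Require Import reals lra.
From Stdlib Require Import ClassicalEpsilon.
Set Implicit Arguments. Unset Strict Implicit. Unset Printing Implicit Defensive.
Import Order.TTheory GRing.Theory Num.Theory.
Local Open Scope ring_scope.

Lemma is_MP_pinv_unique (R : realType) m n (A : 'M[R]_(m, n)) X Y :
  is_MP_pinv A X -> is_MP_pinv A Y -> X = Y.
Proof.
case=> [AXA XAX AXs XAs] [AYA YAY AYs YAs].
have XE : X = X *m A *m Y.
  rewrite -{1}XAX -mulmxA -AXs trmx_mul -{1}AYA trmx_mul (mulmxA X^T) -trmx_mul.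
  by rewrite AXs AYs !mulmxA XAX.
have YE : Y = X *m A *m Y.
  rewrite -{1}YAY -YAs trmx_mul -{1}AXA -(mulmxA A X A) trmx_mul XAs.
  by rewrite -(mulmxA (X *m A)) -trmx_mul YAs -(mulmxA (X *m A)) YAY.
by rewrite {1}XE -YE.
Qed.

Lemma MP_pinvE (R : realType) m n (A : 'M[R]_(m, n)) X :
  is_MP_pinv A X -> MP_pinv A = X.
Proof.
move=> AX; apply: (is_MP_pinv_unique _ AX).
exact: epsilon_spec (ex_intro _ X AX).
Qed.

Lemma mulmx_indic (R : realType) m n (A : 'M[R]_(m, n)) i v :
  (A *m indic R v) i 0 = A i v.
Proof.
rewrite mxE (bigD1 v) //= mxE eqxx mulr1 big1 ?addr0 // => j /negbTE jv.
by rewrite mxE jv mulr0.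
Qed.

Lemma connect_exit (T : finType) (e : rel T) (S : {pred T}) x y :
  connect e x y -> x \in S -> y \notin S ->
  exists a b, [/\ a \in S, b \notin S & e a b].
Proof.
move=> /connectP [p]; elim: p x => [|z p IH] x /=; first by move=> _ -> ->.
move=> /andP [exz zp] yE xS yS.
by have [zS|zS] := boolP (z \in S); [exact: IH zp yE zS yS | exists x, z].
Qed.

Lemma sum_antisym (R : numDomainType) (I : finType) (S : {pred I})
    (h : I -> I -> R) :
  (forall a b, h b a = - h a b) -> \sum_(a in S) \sum_(b in S) h a b = 0.
Proof.
move=> hN; set s := \sum_(a in S) _.
have sN : s = - s.
  rewrite [LHS]exchange_big -sumrN; apply: eq_bigr => a _.
  by rewrite -sumrN; apply: eq_bigr => b _; rewrite hN.
have /eqP : s *+ 2 = 0 by rewrite mulr2n {1}sN addNr.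
by rewrite mulrn_eq0 => /eqP.
Qed.

Lemma sum_eq_natr (R : ringType) (I : finType) (S : {pred I}) v :
  \sum_(a in S) (a == v)%:R = (v \in S)%:R :> R.
Proof.
have [vS|vS] := boolP (v \in S).
  by rewrite (bigD1 v vS) /= eqxx big1 ?addr0 // => a /andP [_ /negbTE ->].
by rewrite big1 // => a aS; case: eqP aS vS => // -> ->.
Qed.

Section LaplacianPseudoinverse.

Variables (R : realType) (n : nat) (e : rel 'I_n).
Local Notation L := (laplacian R e).

Lemma laplacian_mulmxE k (B : 'M[R]_(n, k)) a j :
  (L *m B) a j = \sum_b (if e a b then B a j - B b j else 0).
Proof.
rewrite mxE; under eq_bigr => b _ do rewrite !mxE mulrBl.
rewrite sumrB (bigD1 a) //= eqxx big1 ?addr0 => [|b /negbTE]; last first.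
  by rewrite eq_sym => ->; rewrite mul0r.
have -> : \sum_b (if e a b then B a j - B b j else 0)
    = \sum_b (if e a b then B a j else 0) - \sum_b (if e a b then 1 else 0) * B b j.
  by rewrite -sumrB; apply: eq_bigr => b _; case: (e a b); rewrite ?mul1r ?mul0r ?subr0.
by rewrite -big_mkcond /= sumr_const cardsE mulr_natl.
Qed.

Hypothesis e_sym : symmetric e.
Let e_connect_sym : connect_sym e := sym_connect_sym e_sym.

Lemma trmx_laplacian : L^T = L.
Proof. by apply/matrixP => a b; rewrite !mxE e_sym eq_sym; case: eqP => // ->. Qed.

Definition component (a : 'I_n) : {set 'I_n} := [set k | connect e a k].

Lemma card_component_gt0 a : (0 < #|component a|)%N.
Proof. by apply/card_gt0P; exists a; rewrite inE connect0. Qed.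

Lemma card_component_neq0 a : #|component a|%:R != 0 :> R.
Proof. by rewrite pnatr_eq0 -lt0n card_component_gt0. Qed.

Lemma component_eq a b : connect e a b -> component a = component b.
Proof. by move=> ab; apply/setP => k; rewrite !inE (same_connect e_connect_sym ab). Qed.

(* The orthogonal projection onto the vectors that are constant on each
   connected component, i.e. onto the kernel of [L]. *)
Definition avgmx : 'M[R]_n :=
  \matrix_(a, j) (if connect e a j then #|component a|%:R^-1 else 0).

Local Notation P := avgmx.

Lemma avgmx_connect a b j : connect e a b -> P a j = P b j.
Proof.
by move=> ab; rewrite !mxE (component_eq ab) (same_connect e_connect_sym ab).
Qed.

Lemma avgmx_mulmxE k (B : 'M[R]_(n, k)) a j :
  (P *m B) a j = #|component a|%:R^-1 * \sum_(b in component a) B b j.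
Proof.
rewrite mxE big_distrr /= [RHS]big_mkcond /=; apply: eq_bigr => b _.
by rewrite mxE inE; case: (connect e a b); rewrite ?mul0r.
Qed.

Lemma avgmx_mulmx_const (z : 'cV[R]_n) a :
  (forall j, connect e a j -> z j 0 = z a 0) -> (P *m z) a 0 = z a 0.
Proof.
move=> zconst; rewrite avgmx_mulmxE (eq_bigr (fun _ => z a 0)) => [|j]; last first.
  by rewrite inE => /zconst.
by rewrite sumr_const -[z a 0 *+ _]mulr_natl mulKf ?card_component_neq0.
Qed.

Lemma trmx_avgmx : P^T = P.
Proof.
apply/matrixP => a j; rewrite mxE.
have [aj|naj] := boolP (connect e a j).
  by rewrite (avgmx_connect _ aj) !mxE connect0 e_connect_sym aj.
by rewrite !mxE e_connect_sym (negbTE naj).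
Qed.

Lemma avgmx_idem : P *m P = P.
Proof.
apply/matrixP => a j; rewrite avgmx_mulmxE.
rewrite (eq_bigr (fun _ => P a j)) => [|b]; last first.
  by rewrite inE => ab; rewrite (avgmx_connect _ ab).
by rewrite sumr_const -[P a j *+ _]mulr_natl mulKf ?card_component_neq0.
Qed.

Lemma laplacian_avgmx : L *m P = 0.
Proof.
apply/matrixP => a j; rewrite laplacian_mulmxE [RHS]mxE; apply: big1 => b _.
by case: ifP => // ab; rewrite (avgmx_connect _ (connect1 ab)) subrr.
Qed.

Lemma avgmx_laplacian : P *m L = 0.
Proof.
by rewrite -trmx_avgmx -trmx_laplacian -trmx_mul laplacian_avgmx trmx0.
Qed.

Lemma sum_laplacian_cut (z : 'cV[R]_n) (S : {set 'I_n}) :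
  \sum_(a in S) (L *m z) a 0 =
  \sum_(a in S) \sum_(b in ~: S) (if e a b then z a 0 - z b 0 else 0).
Proof.
pose h a b := if e a b then z a 0 - z b 0 else 0.
have hN a b : h b a = - h a b by rewrite /h e_sym; case: (e a b); rewrite ?opprB ?oppr0.
transitivity (\sum_(a in S) \sum_(b in S) h a b + \sum_(a in S) \sum_(b in ~: S) h a b).
  rewrite -big_split /=; apply: eq_bigr => a _.
  rewrite laplacian_mulmxE (bigID (mem S)) /=.
  by under [X in _ + X]eq_bigl do rewrite -in_setC.
by rewrite sum_antisym ?add0r.
Qed.

Definition flux_bounded (z : 'cV[R]_n) (c : R) :=
  forall r (S : {set 'I_n}), S \subset component r ->
    `|\sum_(a in S) (L *m z) a 0| <= c.

Lemma flux_boundedN z c : flux_bounded z c -> flux_bounded (- z) c.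
Proof.
move=> zc r S /zc; under [X in _ <= _ -> `|X| <= _]eq_bigr do rewrite mulmxN mxE.
by rewrite sumrN normrN.
Qed.

Lemma flux_bounded_ge0 z c (r : 'I_n) : flux_bounded z c -> 0 <= c.
Proof. by move/(_ r set0 (sub0set _)); rewrite big_set0 normr0. Qed.

Lemma flux_bounded_ker z : L *m z = 0 -> flux_bounded z 0.
Proof. by move=> Lz r S _; rewrite Lz big1 ?normr0 // => a _; rewrite mxE. Qed.

Definition superlevel (z : 'cV[R]_n) i : {set 'I_n} :=
  [set k | connect e i k & z i 0 < z k 0].

Lemma superlevel_proper z i a :
  a \in superlevel z i -> superlevel z a \proper superlevel z i.
Proof.
rewrite inE => /andP [ia zia]; apply/properP; split.
  apply/subsetP => k; rewrite !inE => /andP [ak zak].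
  by rewrite (connect_trans ia ak) (lt_trans zia zak).
by exists a; rewrite !inE ?ltxx ?andbF // ia zia.
Qed.

Lemma superlevel_edge z i a b :
  a \in superlevel z i -> b \notin superlevel z i -> e a b -> z b 0 <= z i 0 < z a 0.
Proof.
rewrite !inE => /andP [ia ->] + ab; rewrite (connect_trans ia (connect1 ab)) /=.
by rewrite -leNgt => ->.
Qed.

Lemma exists_superlevel_step z c i j :
  flux_bounded z c -> connect e i j -> z i 0 < z j 0 ->
  exists2 a, a \in superlevel z i & z a 0 <= z i 0 + c.
Proof.
move=> zc ij zij; set S := superlevel z i.
have jS : j \in S by rewrite inE ij zij.
have iS : i \notin S by rewrite inE ltxx andbF.
rewrite e_connect_sym in ij.
have [a [b [aS bS ab]]] := connect_exit ij jS iS.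
exists a => //; have /andP [zbi _] := superlevel_edge aS bS ab.
suff : z a 0 - z b 0 <= c by lra.
have cut_ge0 a' b' : a' \in S -> b' \in ~: S ->
    0 <= if e a' b' then z a' 0 - z b' 0 else 0.
  rewrite in_setC => a'S b'S; case: ifP => // a'b'.
  by have /andP [? ?] := superlevel_edge a'S b'S a'b'; lra.
have Si : S \subset component i by apply/subsetP => k; rewrite !inE => /andP [].
apply: le_trans (le_trans (ler_norm _) (zc i S Si)).
have bS' : b \in ~: S by rewrite inE.
rewrite sum_laplacian_cut (bigD1 a aS) (bigD1 b bS') /= ab.
rewrite -addrA lerDl addr_ge0 ?sumr_ge0 // => [b' /andP [? _]|a' /andP [? _]].
  exact: cut_ge0.
by apply: sumr_ge0 => b' ?; exact: cut_ge0.
Qed.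

Lemma flux_bounded_increase z c i j :
  flux_bounded z c -> connect e i j -> z j 0 - z i 0 <= c * #|superlevel z i|%:R.
Proof.
move=> zc; have c_ge0 := flux_bounded_ge0 i zc.
move: {2}#|_|.+1 (ltnSn #|superlevel z i|) => N; elim: N i j => // N IH i j Ni ij.
have [zji|zij] := leP (z j 0) (z i 0).
  by apply: le_trans (mulr_ge0 c_ge0 (ler0n _ _)); rewrite subr_le0.
have [a ai zai] := exists_superlevel_step zc ij zij.
have aj : connect e a j.
  by move: ai; rewrite inE e_connect_sym => /andP [ai _]; exact: connect_trans ai ij.
have card_lt := proper_card (superlevel_proper ai).
have := IH a j (leq_trans card_lt Ni) aj.
have : c * #|superlevel z a|%:R + c <= c * #|superlevel z i|%:R.
  by rewrite -[X in _ + X]mulr1 -mulrDr ler_wpM2l // natr1 ler_nat.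
lra.
Qed.

Lemma laplacian_ker_const (z : 'cV[R]_n) i j :
  L *m z = 0 -> connect e i j -> z j 0 = z i 0.
Proof.
move=> /flux_bounded_ker z0 ij; have := flux_bounded_increase z0 ij.
rewrite e_connect_sym in ij; have := flux_bounded_increase z0 ij.
rewrite !mul0r; lra.
Qed.

Lemma sum_component_eq0 (z : 'cV[R]_n) a :
  P *m z = 0 -> \sum_(j in component a) z j 0 = 0.
Proof.
move=> /(congr1 (fun M : 'cV[R]_n => M a 0)) /eqP.
by rewrite avgmx_mulmxE mxE mulf_eq0 invr_eq0 (negbTE (card_component_neq0 a)) => /eqP.
Qed.

Lemma flux_bounded_oppr_le z c a :
  flux_bounded z c -> P *m z = 0 -> - z a 0 <= c * n%:R.
Proof.
move=> zc Pz; have c_ge0 := flux_bounded_ge0 a zc.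
have step j : j \in component a -> z j 0 - z a 0 <= c * n%:R.
  rewrite inE => aj; apply: le_trans (flux_bounded_increase zc aj) _.
  by rewrite ler_wpM2l // ler_nat; apply: leq_trans (max_card _) _; rewrite card_ord.
have : \sum_(j in component a) (z j 0 - z a 0) <= \sum_(j in component a) c * n%:R.
  exact: ler_sum.
rewrite sumrB sum_component_eq0 // !sumr_const sub0r.
by rewrite -mulNrn lerMn2r eqn0Ngt card_component_gt0.
Qed.

Lemma flux_bounded_abs z c a :
  flux_bounded z c -> P *m z = 0 -> `|z a 0| <= c * n%:R.
Proof.
move=> zc Pz; rewrite ler_norml lerNl flux_bounded_oppr_le //=.
have := flux_bounded_oppr_le a (flux_boundedN zc).
by rewrite mulmxN Pz oppr0 mxE opprK; apply.
Qed.

Lemma mulmx_avgmx_laplacianD : P *m (L + P) = P.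
Proof. by rewrite mulmxDr avgmx_laplacian avgmx_idem add0r. Qed.

Lemma mulmx_laplacianD_avgmx : (L + P) *m P = P.
Proof. by rewrite mulmxDl laplacian_avgmx avgmx_idem add0r. Qed.

Lemma laplacian_avgmx_ker (x : 'cV[R]_n) : (L + P) *m x = 0 -> x = 0.
Proof.
move=> Mx; have Px : P *m x = 0 by rewrite -mulmx_avgmx_laplacianD -mulmxA Mx mulmx0.
have Lx : L *m x = 0 by move: Mx; rewrite mulmxDl Px addr0.
apply/matrixP => a b; rewrite (ord1 b) [RHS]mxE.
by rewrite -(avgmx_mulmx_const (fun j => laplacian_ker_const Lx)) Px mxE.
Qed.

Lemma unitmx_laplacian_avgmx : L + P \in unitmx.
Proof.
rewrite -unitmx_tr -row_free_unit; apply: inj_row_free => v vM.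
apply: trmx_inj; rewrite trmx0; apply: laplacian_avgmx_ker.
by rewrite -[L + P]trmxK -trmx_mul vM trmx0.
Qed.

Lemma avgmx_invmx : P *m invmx (L + P) = P.
Proof.
rewrite -[X in X *m _]mulmx_avgmx_laplacianD -mulmxA.
by rewrite mulmxV ?mulmx1 ?unitmx_laplacian_avgmx.
Qed.

Lemma invmx_avgmx : invmx (L + P) *m P = P.
Proof.
rewrite -[X in _ *m X]mulmx_laplacianD_avgmx mulmxA.
by rewrite mulVmx ?mul1mx ?unitmx_laplacian_avgmx.
Qed.

Definition laplacian_pinv : 'M[R]_n := invmx (L + P) - P.
Local Notation X := laplacian_pinv.

Lemma laplacian_mulmx_pinv : L *m X = 1%:M - P.
Proof.
rewrite mulmxBr laplacian_avgmx subr0 -[X in X *m _](addrK P) mulmxBl.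
by rewrite mulmxV ?unitmx_laplacian_avgmx // avgmx_invmx.
Qed.

Lemma pinv_mulmx_laplacian : X *m L = 1%:M - P.
Proof.
rewrite mulmxBl avgmx_laplacian subr0 -[X in _ *m X](addrK P) mulmxBr.
by rewrite mulVmx ?unitmx_laplacian_avgmx // invmx_avgmx.
Qed.

Lemma avgmx_mulmx_pinv : P *m X = 0.
Proof. by rewrite mulmxBr avgmx_invmx avgmx_idem subrr. Qed.

Lemma trmx_laplacian_pinv : X^T = X.
Proof. by rewrite linearB /= trmx_inv linearD /= trmx_laplacian trmx_avgmx. Qed.

Lemma is_MP_pinv_laplacian : is_MP_pinv L X.
Proof.
split.
- by rewrite laplacian_mulmx_pinv mulmxBl mul1mx avgmx_laplacian subr0.
- by rewrite pinv_mulmx_laplacian mulmxBl mul1mx avgmx_mulmx_pinv subr0.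
- by rewrite laplacian_mulmx_pinv linearB /= trmx1 trmx_avgmx.
- by rewrite pinv_mulmx_laplacian linearB /= trmx1 trmx_avgmx.
Qed.

Lemma sum_proj_indic r (S : {set 'I_n}) v : S \subset component r ->
  \sum_(a in S) ((1%:M - P) *m indic R v) a 0 =
  (v \in S)%:R - #|S|%:R / #|component r|%:R * (v \in component r)%:R.
Proof.
move=> Sr; pose c : R := #|component r|%:R^-1 * (v \in component r)%:R.
rewrite (eq_bigr (fun a => (a == v)%:R - c)).
  by rewrite sumrB sum_eq_natr sumr_const -mulrnAl -[_^-1 *+ _]mulr_natl.
move=> a aS; have ra : connect e r a by rewrite -inE; exact: subsetP Sr a aS.
rewrite mulmx_indic !mxE /c -(component_eq ra) inE (same_connect e_connect_sym ra).
by case: (connect e a v); rewrite ?mulr1 ?mulr0.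
Qed.

Lemma flux_bounded_pinv_indic s t : flux_bounded (X *m (indic R s - indic R t)) 1.
Proof.
move=> r S Sr; rewrite mulmxA laplacian_mulmx_pinv mulmxBr.
under eq_bigr => a _ do rewrite mxE [(- _ : 'cV_n) a 0]mxE.
rewrite sumrB !(sum_proj_indic _ Sr).
set q := #|S|%:R / #|component r|%:R.
have /andP [q_ge0 q_le1] : 0 <= q <= 1.
  rewrite divr_ge0 ?ler0n //= ler_pdivrMr ?ltr0n ?card_component_gt0 // mul1r.
  by rewrite ler_nat subset_leq_card.
have bound v : - q <= (v \in S)%:R - q * (v \in component r)%:R <= 1 - q.
  have [vS|_] := boolP (v \in S).
    by rewrite (subsetP Sr v vS) /=; apply/andP; split; lra.
  by case: (v \in component r) => /=; apply/andP; split; lra.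
have := bound s; have := bound t; rewrite ler_norml; lra.
Qed.

Lemma abs_pinv_indic_le s t a : `|(X *m (indic R s - indic R t)) a 0| <= n%:R.
Proof.
rewrite -[n%:R]mul1r; apply: flux_bounded_abs; first exact: flux_bounded_pinv_indic.
by rewrite mulmxA avgmx_mulmx_pinv mul0mx.
Qed.

Lemma biharmonic_sqE s t :
  biharmonic_sq R e s t = \sum_a (X *m (indic R s - indic R t)) a 0 ^+ 2.
Proof.
rewrite /biharmonic_sq (MP_pinvE is_MP_pinv_laplacian) /=.
rewrite -{1}trmx_laplacian_pinv mulmxA -trmx_mul -mulmxA mxE.
by apply: eq_bigr => a _; rewrite mxE expr2.
Qed.

End LaplacianPseudoinverse.

Theorem theoremA2 (R : realType) (n : nat) (e : rel 'I_n) (s t : 'I_n) :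
  simple_graph e -> biharmonic_sq R e s t <= (n%:R : R) ^+ 3.
Proof.
(* Loops cancel in [D - A], so only the symmetry of [e] is needed. *)
case=> e_sym _; rewrite biharmonic_sqE //.
apply: le_trans (_ : \sum_(a < n) n%:R ^+ 2 <= _).
  apply: ler_sum => a _; have := abs_pinv_indic_le R e_sym s t a.
  by rewrite ler_norml; nra.
by rewrite sumr_const card_ord -(mulr_natl (n%:R ^+ 2)) -exprS.
Qed.
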